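(* Let $Q$ and $W$ satisfy the standing assumptions with $W=Y$, let $l\ge1$, and assume $Q$ is future unique w.r.t. $I^l_l$. Then $\hat Q^{l\triangledown}$ and $\hat Q^{I^l_l}$ are bisimilar w.r.t. $Y$, and $\hat Q^{I^l_l}$ is simulated by $\hat Q^{I^l_0}$ w.r.t. $Y$.
   Context: Strings and signals: $\diamond$ is a symbol not in any other set considered. For a set $A$ and $l\in\mathbb N_0$, $A^l$ is the set of strings of length $l$ over $A$, indexed $\zeta=\zeta(0)\cdots\zeta(l-1)$; $\lambda$ is the empty string and $\cdot$ denotes concatenation. For a map $w$ on $\mathbb Z$ (or a string) and integers $t_1\le t_2$, $w|_{[t_1,t_2]}=w(t_1)\cdots w(t_2)$ is the string of length $t_2-t_1+1$ (absolute time forgotten); if $t_2<t_1$ it is $\lambda$. State machines: a state machine is $Q=(X,U,Y,\delta,X_0)$ with $X_0\subseteq X$, $\delta\subseteq X\times U\times Y\times X$. Let $H_\delta(x)=\{y:\exists u,x'.\,(x,u,y,x')\in\delta\}$, $F_\delta(x,u)=\{x':\exists y\in H_\delta(x).\,(x,u,y,x')\in\delta\}$. The full behavior $\mathcal B_f(Q)$ is the set of $(\mu,\nu,\xi)\in(U\times Y\times X)^{\mathbb N_0}$ with $\xi(0)\in X_0$ and $(\xi(k),\mu(k),\nu(k),\xi(k+1))\in\delta$ for all $k\in\mathbb N_0$. $Q$ is live and reachable if every $x\in X_0$ is $\xi(0)$ for some $(\mu,\nu,\xi)\in\mathcal B_f(Q)$ and every $x\in X$ is $\xi(k)$ for some such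 trajectory and some $k$. Standing assumptions: $Q=(X,U,Y,\delta,X_0)$ is live and reachable and satisfies $(x,u,y,x')\in\delta\iff(x'\in F_\delta(x,u)\wedge y\in H_\delta(x))$ for all $x,x'\in X,u\in U,y\in Y$; the external signal space $W$ is finite and either $W=U\times Y$ or $W=Y$ (here $W=Y$, with $\pi_W(u,y)=\pi_Y(u,y)=y$). Behaviors: $\mathcal B_S(Q)$ is the set of pairs $(w,\xi)$ of maps on $\mathbb Z$ with $w(k)=\xi(k)=\diamond$ for $k<0$ and $(w(k),\xi(k))=(\nu(k),\xi'(k))$ for $k\ge0$, for some $(\mu,\nu,\xi')\in\mathcal B_f(Q)$. Corresponding strings: for integers $a,b$ and $x\in X$, $E^{[a,b]}(x)=\{\zeta:\exists(w,\xi)\in\mathcal B_S(Q),k\in\mathbb N_0:\ \xi(k)=x,\ \zeta=w|_{[k+a,k+b]}\}$. For $l,m\in\mathbb N_0$ with $m\le l$, $I^l_m=[m-l,m-1]$; in particular $I^l_l=[0,l-1]$, $I^l_0=[-l,-1]$. Future uniqueness: $Q$ is future unique w.r.t. $I^l_m$ if for all $x\in X$ and $\zeta,\zeta'\in E^{I^l_m}(x)$, $\zeta|_{[l-m,l-1]}=\zeta'|_{[l-m,l-1]}$. Abstract state machine: $\hat Q^{I^l_m}=(\hat X^{I^l_m},U,Y,\hat\delta^{I^l_m},\hat X^{I^l_m}_0)$ with $\hat X^{I^l_m}=\bigcup_{x\in X}E^{I^l_m}(x)$, $\hat X^{I^l_m}_0=\bigcup_{x\in X_0}E^{I^l_m}(x)$,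 and $(\hat x,u,y,\hat x')\in\hat\delta^{I^l_m}$ iff (1) $\hat x'|_{[0,l-m-1]}=(\hat x|_{[0,l-m-1]}\cdot\pi_W(u,y))|_{[1,l-m]}$, (2) $\hat x|_{[l-m,l-1]}=(\pi_W(u,y)\cdot\hat x'|_{[l-m,l-2]})|_{[0,m-1]}$, and (3) there are $x,x'\in X$ with $\hat x\in E^{I^l_m}(x)$, $\hat x'\in E^{I^l_m}(x')$, $(x,u,y,x')\in\delta$. Quotient state machine (for $W=Y$): $\hat Q^{l\triangledown}=(\hat X^{l\triangledown},U,Y,\hat\delta^{l\triangledown},\hat X^{l\triangledown}_0)$ with $\hat X^{l\triangledown}=\{E^{I^l_l}(x):x\in X\}$, $\hat X^{l\triangledown}_0=\{E^{I^l_l}(x):x\in X_0\}$, and $(\hat x,u,y,\hat x')\in\hat\delta^{l\triangledown}$ iff there exist $x,x'\in X$ with $\hat x=E^{I^l_l}(x)$, $\hat x'=E^{I^l_l}(x')$ and $(x,u,y,x')\in\delta$. Simulation relations: for state machines $Q_i=(X_i,U,Y,\delta_i,X_{0,i})$, $i=1,2$, and $V\in\{U\times Y,Y\}$, a relation $\mathcal R\subseteq X_1\times X_2$ is a simulation relation from $Q_1$ to $Q_2$ w.r.t. $V$ if (a) for every $x_1\in X_{0,1}$ there is $x_2\in X_{0,2}$ with $(x_1,x_2)\in\mathcal R$, and (b) for all $(x_1,x_2)\in\mathcal R$ and $(x_1,u_1,y_1,x_1')\in\delta_1$ there exist $u_2,y_2,x_2'$ with $(x_2,u_2,y_2,x_2')\in\delta_2$,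 $(x_1',x_2')\in\mathcal R$ and $\pi_V(u_1,y_1)=\pi_V(u_2,y_2)$. $Q_1$ is simulated by $Q_2$ w.r.t. $V$ if such a relation exists; $Q_1,Q_2$ are bisimilar w.r.t. $V$ if there is a simulation relation $\mathcal R$ from $Q_1$ to $Q_2$ w.r.t. $V$ such that $\mathcal R^{-1}=\{(x_2,x_1):(x_1,x_2)\in\mathcal R\}$ is a simulation relation from $Q_2$ to $Q_1$ w.r.t. $V$. *)

From mathcomp Require Import all_boot.
From Stdlib Require Import ZArith.

Set Implicit Arguments.
Unset Strict Implicit.
Unset Printing Implicit Defensive.

(* A state machine (X,U,Y,delta,X0) with a carrier type S; the state set X
   is the predicate sm_st. *)
Record SM (S U Y : Type) := mkSM {
  sm_st : S -> Prop;
  sm_tr : S -> U -> Y -> S -> Prop;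
  sm_init : S -> Prop }.

(* w|_[t1,t2] for a map w on Z: string of length t2-t1+1 (empty if t2<t1). *)
Definition restr (T : Type) (w : Z -> T) (t1 t2 : Z) : seq T :=
  map (fun i : nat => w (t1 + Z.of_nat i)%Z) (iota 0 (Z.to_nat (t2 - t1 + 1))).

Definition strfun (T : Type) (d : T) (s : seq T) : Z -> T :=
  fun k => nth d s (Z.to_nat k).

Definition srestr (T : Type) (d : T) (s : seq T) (t1 t2 : Z) : seq T :=
  restr (strfun d s) t1 t2.

(* The diamond symbol is None; signals/strings over Y ∪ {◇} are over option Y. *)

Section Machine.
Variables (X U Y : Type).
Variable delta : X -> U -> Y -> X -> Prop.
Variable X0 : X -> Prop.

Definition Hdelta (x : X) (y : Y) : Prop := exists u x', delta x u y x'.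
Definition Fdelta (x : X) (u : U) (x' : X) : Prop :=
  exists y, Hdelta x y /\ delta x u y x'.

Definition Bf (mu : nat -> U) (nu : nat -> Y) (xi : nat -> X) : Prop :=
  X0 (xi 0) /\ forall k : nat, delta (xi k) (mu k) (nu k) (xi k.+1).

Definition live_reachable : Prop :=
  (forall x, X0 x -> exists mu nu xi, Bf mu nu xi /\ xi 0 = x) /\
  (forall x, exists mu nu xi (k : nat), Bf mu nu xi /\ xi k = x).

Definition standing_delta : Prop :=
  forall x u y x', delta x u y x' <-> (Fdelta x u x' /\ Hdelta x y).

Definition BS (w : Z -> option Y) (xi : Z -> option X) : Prop :=
  exists mu nu xi', Bf mu nu xi' /\
    forall k : Z,
      ((k < 0)%Z -> w k = None /\ xi k = None) /\
      ((0 <= k)%Z -> w k = Some (nu (Z.to_nat k)) /\ xi k = Some (xi' (Z.to_nat k))).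

Definition Estr (a b : Z) (x : X) (zeta : seq (option Y)) : Prop :=
  exists w xi (k : nat), BS w xi /\ xi (Z.of_nat k) = Some x /\
    zeta = restr w (Z.of_nat k + a)%Z (Z.of_nat k + b)%Z.

Definition Ilo (l m : nat) : Z := (Z.of_nat m - Z.of_nat l)%Z.
Definition Ihi (l m : nat) : Z := (Z.of_nat m - 1)%Z.

Definition EI (l m : nat) (x : X) := Estr (Ilo l m) (Ihi l m) x.

Definition future_unique (l m : nat) : Prop :=
  forall x zeta zeta', EI l m x zeta -> EI l m x zeta' ->
    srestr None zeta (Z.of_nat l - Z.of_nat m) (Z.of_nat l - 1) =
    srestr None zeta' (Z.of_nat l - Z.of_nat m) (Z.of_nat l - 1).

(* abstract state machine \hat Q^{I^l_m}, with pi_W(u,y) = y *)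
Definition abstractSM (l m : nat) : SM (seq (option Y)) U Y :=
  {| sm_st := fun xh => exists x, EI l m x xh;
     sm_init := fun xh => exists x, X0 x /\ EI l m x xh;
     sm_tr := fun xh u y xh' =>
       let L := Z.of_nat l in let M := Z.of_nat m in
       srestr None xh' 0 (L - M - 1) =
         srestr None (srestr None xh 0 (L - M - 1) ++ [:: Some y]) 1 (L - M) /\
       srestr None xh (L - M) (L - 1) =
         srestr None (Some y :: srestr None xh' (L - M) (L - 2)) 0 (M - 1) /\
       exists x x', EI l m x xh /\ EI l m x' xh' /\ delta x u y x' |}.

Definition quotientSM (l : nat) : SM (seq (option Y) -> Prop) U Y :=
  {| sm_st := fun S => exists x, S = EI l l x;
     sm_init := fun S => exists x, X0 x /\ S = EI l l x;
     sm_tr := fun S u y S' =>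
       exists x x', S = EI l l x /\ S' = EI l l x' /\ delta x u y x' |}.

End Machine.

(* V ∈ {U×Y, Y} *)
Inductive extspace := VUY | VY.

Definition piV_eq (V : extspace) (U Y : Type) (u1 : U) (y1 : Y) (u2 : U) (y2 : Y)
  : Prop :=
  match V with VUY => u1 = u2 /\ y1 = y2 | VY => y1 = y2 end.

Definition is_simulation (V : extspace) (S1 S2 U Y : Type)
  (Q1 : SM S1 U Y) (Q2 : SM S2 U Y) (R : S1 -> S2 -> Prop) : Prop :=
  (forall x1 x2, R x1 x2 -> sm_st Q1 x1 /\ sm_st Q2 x2) /\
  (forall x1, sm_init Q1 x1 -> exists x2, sm_init Q2 x2 /\ R x1 x2) /\
  (forall x1 x2 u1 y1 x1', R x1 x2 -> sm_tr Q1 x1 u1 y1 x1' ->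
     exists u2 y2 x2', sm_tr Q2 x2 u2 y2 x2' /\ R x1' x2' /\ piV_eq V u1 y1 u2 y2).

Definition simulated_by (V : extspace) (S1 S2 U Y : Type)
  (Q1 : SM S1 U Y) (Q2 : SM S2 U Y) : Prop :=
  exists R, is_simulation V Q1 Q2 R.

Definition bisimilar (V : extspace) (S1 S2 U Y : Type)
  (Q1 : SM S1 U Y) (Q2 : SM S2 U Y) : Prop :=
  exists R, is_simulation V Q1 Q2 R /\
            is_simulation V Q2 Q1 (fun x2 x1 => R x1 x2).

From Stdlib Require Import ZArith Lia FunctionalExtensionality PropExtensionality.
From mathcomp Require Import all_boot zify.

Set Implicit Arguments.
Unset Strict Implicit.
Unset Printing Implicit Defensive.

(* Under future uniqueness every state x has exactly one future string
   E^{[0,l-1]}(x), and reachability makes it exist; hence x |-> E^{[0,l-1]}(x)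
   identifies the quotient machine with the abstract future machine, and along
   a transition x -y-> x' the future of x is y followed by the first l-1
   symbols of the future of x'.  For the simulation into the past machine, a
   future string f is related to a past string p when every window of length
   l+1 of p.f occurs in some behaviour.  The first window p.y then yields a
   transition of the past machine, and the windows of the shifted pair are
   either old windows or y.f', which occurs in a behaviour obtained by
   splicing a run reaching x with a run leaving x'. *)

Section Restriction.
Variable T : Type.
Implicit Types (w : Z -> T) (a b c : Z).

Lemma size_restr w a b : size (restr w a b) = Z.to_nat (b - a + 1).
Proof. by rewrite /restr size_map size_iota. Qed.

Lemma nth_restr w a b d i : (i < Z.to_nat (b - a + 1))%N ->
  nth d (restr w a b) i = w (a + Z.of_nat i)%Z.
Proof. by move=> Hi; rewrite /restr (nth_map 0%N) ?size_iota // nth_iota. Qed.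

Lemma restr_nil w a b : (b - a + 1 <= 0)%Z -> restr w a b = [::].
Proof. by move=> H; apply/size0nil; rewrite size_restr; lia. Qed.

Lemma restr_ext w w' a b a' b' : (b' - a' = b - a)%Z ->
  (forall i : nat, (i < Z.to_nat (b - a + 1))%N ->
     w (a + Z.of_nat i)%Z = w' (a' + Z.of_nat i)%Z) ->
  restr w a b = restr w' a' b'.
Proof.
move=> Hlen Hw; rewrite /restr Hlen; apply/eq_in_map => i.
by rewrite mem_iota add0n => /andP[_]; apply: Hw.
Qed.

Lemma restr_cons w a b : (a <= b)%Z -> restr w a b = w a :: restr w (a + 1) b.
Proof.
move=> Hab; apply: (eq_from_nth (x0 := w a)).
  by rewrite /= !size_restr; lia.
move=> [|i]; rewrite size_restr => Hi.
  by rewrite nth_restr //= Z.add_0_r.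
by rewrite nth_restr //= nth_restr; [congr w | ]; lia.
Qed.

Lemma take_restr w a b n : (n <= Z.to_nat (b - a + 1))%N ->
  take n (restr w a b) = restr w a (a + Z.of_nat n - 1).
Proof. by move=> Hn; rewrite /restr -map_take take_iota; congr (map _ (iota _ _)); lia. Qed.

Lemma drop_restr w a b n : (n <= Z.to_nat (b - a + 1))%N ->
  drop n (restr w a b) = restr w (a + Z.of_nat n) b.
Proof.
move=> Hn; rewrite /restr -map_drop drop_iota add0n -[n in iota n](addn0 n) iotaDl.
have -> : (Z.to_nat (b - a + 1) - n = Z.to_nat (b - (a + Z.of_nat n) + 1))%N by lia.
rewrite -map_comp.
by apply: eq_map => i /=; congr w; lia.
Qed.

Lemma restr_cat w a b b' c : b' = (b + 1)%Z -> (a <= b + 1 <= c + 1)%Z ->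
  restr w a b ++ restr w b' c = restr w a c.
Proof.
move=> -> Hb; rewrite -(cat_take_drop (Z.to_nat (b - a + 1)) (restr w a c)).
by rewrite take_restr ?drop_restr ?size_restr; try lia; f_equal; f_equal; lia.
Qed.

Lemma srestr_nil d (s : seq T) a b : (b - a + 1 <= 0)%Z -> srestr d s a b = [::].
Proof. exact: restr_nil. Qed.

Lemma srestr_drop_take d (s : seq T) a b i n : a = Z.of_nat i ->
  b = (Z.of_nat (i + n) - 1)%Z -> (i + n <= size s)%N ->
  srestr d s a b = take n (drop i s).
Proof.
move=> -> -> H; apply: (eq_from_nth (x0 := d)).
  by rewrite /srestr size_restr size_takel ?size_drop; lia.
move=> j; rewrite /srestr size_restr => Hj.
rewrite nth_restr // /strfun nth_take; last lia.
by rewrite nth_drop; congr nth; lia.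
Qed.

Lemma srestr_full d (s : seq T) a b : a = 0%Z -> b = (Z.of_nat (size s) - 1)%Z ->
  srestr d s a b = s.
Proof. by move=> Ha Hb; rewrite (@srestr_drop_take _ _ _ _ 0 (size s)) ?drop0 ?take_size. Qed.

End Restriction.

Section Windows.
Variables (T : Type) (n : nat).
Implicit Types (s t r : seq T) (a : T).

Lemma take_cat_cons s a r k : size s = n ->
  take (n + k.+1) (s ++ a :: r) = s ++ a :: take k r.
Proof. by move=> ss; rewrite take_cat ss ltnNge leq_addr addKn. Qed.

Lemma behead_rcons_cat s a t : behead (s ++ [:: a]) ++ t = behead (s ++ a :: t).
Proof. by case: s => //= b s; rewrite -catA. Qed.

Lemma window_first s a r : size s = n -> take n.+1 (s ++ a :: r) = s ++ [:: a].
Proof. by move=> ss; rewrite take_cat ss ltnNge leqnSn subSnn /= take0. Qed.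

Lemma window_shift s a t j : size s = n -> (j.+1 < n)%N ->
  take n.+1 (drop j (behead (s ++ [:: a]) ++ t)) =
  take n.+1 (drop j.+1 (s ++ a :: take (n - 1) t)).
Proof.
move=> ss Hj; rewrite behead_rcons_cat -drop1 drop_drop addn1 !take_drop addSnnS.
by rewrite !take_cat_cons // take_takel //; lia.
Qed.

Lemma window_last s a t : size s = n -> size t = n -> (0 < n)%N ->
  take n.+1 (drop (n - 1) (behead (s ++ [:: a]) ++ t)) = a :: t.
Proof.
move=> ss st Hn; rewrite behead_rcons_cat -drop1 drop_drop subnK //.
by rewrite drop_size_cat // take_oversize //= st.
Qed.

End Windows.

Definition signal_of (T : Type) (f : nat -> T) (k : Z) : option T :=
  if (k <? 0)%Z then None else Some (f (Z.to_nat k)).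

Lemma signal_of_nat T (f : nat -> T) k n : k = Z.of_nat n -> signal_of f k = Some (f n).
Proof. by move->; rewrite /signal_of; case: Z.ltb_spec; [lia | rewrite Nat2Z.id]. Qed.

Section Behaviours.
Variables (X U Y : Type) (delta : X -> U -> Y -> X -> Prop) (X0 : X -> Prop).

Lemma BS_signal_of mu nu xi : Bf delta X0 mu nu xi ->
  BS delta X0 (signal_of nu) (signal_of xi).
Proof.
move=> Hb; exists mu, nu, xi; split=> // k; rewrite /signal_of.
by split=> Hk; case: Z.ltb_spec; lia || done.
Qed.

Lemma BS_inv w xi : BS delta X0 w xi ->
  exists mu nu xi', Bf delta X0 mu nu xi' /\ w = signal_of nu /\ xi = signal_of xi'.
Proof.
case=> mu [nu [xi' [Hb H]]]; exists mu, nu, xi'; split=> //.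
by split; apply: functional_extensionality => k; rewrite /signal_of;
  have [H1 H2] := H k; (case: Z.ltb_spec => Hk; [case: (H1 Hk) | case: (H2 Hk)]).
Qed.

Lemma EIP l m x s : EI delta X0 l m x s <->
  exists mu nu xi (k : nat), Bf delta X0 mu nu xi /\ xi k = x /\
    s = restr (signal_of nu) (Z.of_nat k + Ilo l m) (Z.of_nat k + Ihi l m).
Proof.
split.
- case=> w [xi [k [/BS_inv [mu [nu [xi' [Hb [-> ->]]]]] [Hx ->]]]].
  exists mu, nu, xi', k; do 2 split=> //.
  by move: Hx; rewrite (signal_of_nat _ (n := k)) // => -[].
- case=> mu [nu [xi [k [Hb [Hx ->]]]]].
  exists (signal_of nu), (signal_of xi), k; split; first exact: BS_signal_of Hb.
  by rewrite (signal_of_nat _ (n := k)) ?Hx.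
Qed.

Lemma EI_size l m x s : EI delta X0 l m x s -> (m <= l)%N -> size s = l.
Proof. by case/EIP=> mu [nu [xi [k [_ [_ ->]]]]] Hm; rewrite size_restr /Ilo /Ihi; lia. Qed.

Lemma Bf_splice mu1 nu1 xi1 j x u y x' mu2 nu2 xi2 k :
  Bf delta X0 mu1 nu1 xi1 -> xi1 j = x -> delta x u y x' ->
  Bf delta X0 mu2 nu2 xi2 -> xi2 k = x' ->
  exists mu nu xi, Bf delta X0 mu nu xi /\ xi j = x /\ nu j = y /\
     forall i, nu (j + i.+1)%N = nu2 (k + i)%N.
Proof.
move=> [H01 H1] Hx Hd [_ H2] Hx'.
exists (fun t => if (t < j)%N then mu1 t else if t == j then u else mu2 (t - j.+1 + k)%N).
exists (fun t => if (t < j)%N then nu1 t else if t == j then y else nu2 (t - j.+1 + k)%N).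
exists (fun t => if (t <= j)%N then xi1 t else xi2 (t - j.+1 + k)%N).
split; [split | split].
- by rewrite leq0n.
- move=> t /=; case: (ltngtP t j) => Ht.
  + exact: H1.
  + have -> : (t.+1 - j.+1 + k = (t - j.+1 + k).+1)%N by lia.
    exact: H2.
  + by subst t; rewrite subnn add0n Hx Hx'.
- by rewrite leqnn.
split; first by rewrite ltnn eqxx.
by move=> i; rewrite ifF ?ifF; [congr nu2 | |]; lia.
Qed.

Section FutureUnique.
Variable l : nat.
Hypothesis LR : live_reachable delta X0.
Hypothesis FU : future_unique delta X0 l l.
Hypothesis l_gt0 : (0 < l)%N.

Lemma EI_future_uniq x s s' : EI delta X0 l l x s -> EI delta X0 l l x s' -> s = s'.
Proof.
move=> Hs Hs'; have := FU Hs Hs'.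
by rewrite !srestr_full //; rewrite ?(EI_size Hs (leqnn l)) ?(EI_size Hs' (leqnn l)); lia.
Qed.

Lemma EI_future_eq x x' s : EI delta X0 l l x s -> EI delta X0 l l x' s ->
  EI delta X0 l l x = EI delta X0 l l x'.
Proof.
move=> Hx Hx'; apply: functional_extensionality => t.
apply: propositional_extensionality.
by split=> Ht; [rewrite (EI_future_uniq Ht Hx) | rewrite (EI_future_uniq Ht Hx')].
Qed.

Lemma EI_future_exists x : exists s, EI delta X0 l l x s.
Proof.
have [mu [nu [xi [k [Hb Hx]]]]] := proj2 LR x.
by eexists; apply/EIP; exists mu, nu, xi, k.
Qed.

Lemma step_window x u y x' s' : delta x u y x' -> EI delta X0 l l x' s' ->
  exists mu nu xi (j : nat), Bf delta X0 mu nu xi /\ xi j = x /\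
    Some y :: s' = restr (signal_of nu) (Z.of_nat j) (Z.of_nat j + Z.of_nat l).
Proof.
move=> Hd /EIP [mu2 [nu2 [xi2 [k [Hb2 [Hx2 ->]]]]]].
have [mu1 [nu1 [xi1 [j [Hb1 Hx1]]]]] := proj2 LR x.
have [mu [nu [xi [Hb [Hxj [Hnuj Hnu]]]]]] := Bf_splice Hb1 Hx1 Hd Hb2 Hx2.
exists mu, nu, xi, j; do 2 split=> //.
rewrite [RHS]restr_cons; last lia.
rewrite (signal_of_nat _ (n := j)) // Hnuj; congr (_ :: _).
apply: restr_ext; rewrite /Ilo /Ihi; first lia.
move=> i _; rewrite (signal_of_nat _ (n := (k + i)%N)); last lia.
by rewrite (signal_of_nat _ (n := (j + i.+1)%N)) ?Hnu //; lia.
Qed.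

Lemma future_shift x u y x' s s' : EI delta X0 l l x s -> delta x u y x' ->
  EI delta X0 l l x' s' -> s = Some y :: take (l - 1) s'.
Proof.
move=> Hs Hd Hs'.
have [mu [nu [xi [j [Hb [Hx Hwin]]]]]] := step_window Hd Hs'.
have Hfut : EI delta X0 l l x (restr (signal_of nu) (Z.of_nat j) (Z.of_nat j + Z.of_nat l - 1)).
  by apply/EIP; exists mu, nu, xi, j; do 2 split=> //; rewrite /Ilo /Ihi; f_equal; lia.
have -> : Some y :: take (l - 1) s' = take l (Some y :: s') by rewrite -{2}(subnK l_gt0) addn1.
by rewrite (EI_future_uniq Hs Hfut) Hwin take_restr ?size_restr; [f_equal | ]; lia.
Qed.

Definition realizable (s : seq (option Y)) : Prop :=
  exists mu nu xi (K : nat), Bf delta X0 mu nu xi /\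
    s = restr (signal_of nu) (Z.of_nat K - Z.of_nat l) (Z.of_nat K).

Lemma step_realizable x u y x' s' : delta x u y x' -> EI delta X0 l l x' s' ->
  realizable (Some y :: s').
Proof.
move=> Hd Hs'; have [mu [nu [xi [j [Hb [_ ->]]]]]] := step_window Hd Hs'.
by exists mu, nu, xi, (j + l)%N; split=> //; f_equal; lia.
Qed.

Lemma realizable_step p y : size p = l -> realizable (p ++ [:: Some y]) ->
  exists z u z', EI delta X0 l 0 z p /\
    EI delta X0 l 0 z' (behead (p ++ [:: Some y])) /\ delta z u y z'.
Proof.
move=> sp [mu [nu [xi [K [Hb E]]]]].
have Hy : nu K = y.
  have := congr1 (nth None ^~ l) E.
  rewrite nth_cat sp ltnn subnn /= nth_restr; last lia.
  by rewrite (signal_of_nat _ (n := K)); [case | lia].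
exists (xi K), (mu K), (xi K.+1); split; [|split].
- apply/EIP; exists mu, nu, xi, K; do 2 split=> //.
  rewrite -(take_size_cat [:: Some y] sp) E take_restr ?size_restr; last lia.
  by rewrite /Ilo /Ihi; f_equal; lia.
- apply/EIP; exists mu, nu, xi, K.+1; do 2 split=> //.
  rewrite -drop1 E drop_restr ?size_restr; last lia.
  by rewrite /Ilo /Ihi; f_equal; lia.
- by rewrite -Hy; apply: (proj2 Hb).
Qed.

Lemma abstract_future_tr x u y x' s s' : EI delta X0 l l x s -> delta x u y x' ->
  EI delta X0 l l x' s' -> sm_tr (abstractSM delta X0 l l) s u y s'.
Proof.
move=> Hs Hd Hs'; have ss' := EI_size Hs' (leqnn l).
split; [|split].
- by rewrite !srestr_nil //; lia.
- rewrite (future_shift Hs Hd Hs') (@srestr_drop_take _ _ s' _ _ 0 (l - 1)) ?drop0;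
    [f_equal | ..]; lia.
- by exists x, x'.
Qed.

Lemma abstract_past_tr p y : size p = l -> realizable (p ++ [:: Some y]) ->
  exists u, sm_tr (abstractSM delta X0 l 0) p u y (behead (p ++ [:: Some y])).
Proof.
move=> sp /(realizable_step sp) [z [u [z' [Hz [Hz' Hd]]]]].
have sp' : size (behead (p ++ [:: Some y])) = l by rewrite size_behead size_cat sp addn1.
have Ep : srestr None p 0 (Z.of_nat l - Z.of_nat 0 - 1) = p.
  by apply: srestr_full; rewrite ?sp; lia.
exists u; split; [|split].
- rewrite Ep srestr_full ?sp'; try lia.
  rewrite (@srestr_drop_take _ _ _ _ _ 1 l) ?size_cat ?sp ?addn1 //; try lia.
  by rewrite drop1 take_oversize ?sp'.
- by rewrite !srestr_nil //; lia.
- by exists z, z'.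
Qed.

Definition quotient_rel (S : seq (option Y) -> Prop) (s : seq (option Y)) : Prop :=
  exists x, S = EI delta X0 l l x /\ EI delta X0 l l x s.

Lemma quotient_future_simulation :
  is_simulation VY (quotientSM delta X0 l) (abstractSM delta X0 l l) quotient_rel.
Proof.
split; [by move=> S s [x [-> Hx]]; split; exists x | split].
- move=> S [x [Hx0 ->]]; have [s Hs] := EI_future_exists x.
  by exists s; split; exists x.
- move=> S s u y S' [x1 [-> Hs]] [x [x' [Ex [-> Hd]]]].
  have [s' Hs'] := EI_future_exists x'.
  exists u, y, s'; split; last by split=> //; exists x'.
  by apply: (abstract_future_tr _ Hd Hs'); rewrite -Ex.
Qed.

Lemma future_quotient_simulation :
  is_simulation VY (abstractSM delta X0 l l) (quotientSM delta X0 l)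
    (fun s S => quotient_rel S s).
Proof.
split; [by move=> s S [x [-> Hx]]; split; exists x | split].
- by move=> s [x [Hx0 Hs]]; exists (EI delta X0 l l x); split; exists x.
- move=> s S u y s' [x1 [-> Hs]] [_ [_ [x [x' [Hx [Hx' Hd]]]]]].
  exists u, y, (EI delta X0 l l x'); split; last by split=> //; exists x'.
  by exists x, x'; rewrite (EI_future_eq Hs Hx).
Qed.

Definition future_past_rel (s p : seq (option Y)) : Prop :=
  (exists x, EI delta X0 l l x s) /\ (exists z, EI delta X0 l 0 z p) /\
  forall j, (j < l)%N -> realizable (take l.+1 (drop j (p ++ s))).

Lemma future_past_rel_init s : sm_init (abstractSM delta X0 l l) s ->
  exists p, sm_init (abstractSM delta X0 l 0) p /\ future_past_rel s p.
Proof.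
case=> x [Hx0 Hs]; have [mu [nu [xi [Hb Hxi0]]]] := proj1 LR x Hx0.
set w := signal_of nu.
have Hpast : EI delta X0 l 0 x (restr w (- Z.of_nat l) (-1)).
  by apply/EIP; exists mu, nu, xi, 0%N; do 2 split=> //; rewrite /Ilo /Ihi; f_equal; lia.
have Hfut : EI delta X0 l l x (restr w 0 (Z.of_nat l - 1)).
  by apply/EIP; exists mu, nu, xi, 0%N; do 2 split=> //; rewrite /Ilo /Ihi; f_equal; lia.
rewrite (EI_future_uniq Hs Hfut).
exists (restr w (- Z.of_nat l) (-1)); do 3 (split; first by exists x).
move=> j Hj; exists mu, nu, xi, j; split=> //.
rewrite restr_cat ?drop_restr ?take_restr ?size_restr; try lia.
by f_equal; lia.
Qed.

Lemma future_past_rel_step s p u y s' : future_past_rel s p ->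
  sm_tr (abstractSM delta X0 l l) s u y s' ->
  exists u' p', sm_tr (abstractSM delta X0 l 0) p u' y p' /\ future_past_rel s' p'.
Proof.
move=> [_ [[z Hz] Hwin]] [_ [_ [x [x' [Hx [Hx' Hd]]]]]].
have Es := future_shift Hx Hd Hx'.
have sp := EI_size Hz (leq0n l).
have ss' := EI_size Hx' (leqnn l).
have Hfirst : realizable (p ++ [:: Some y]).
  by rewrite -(window_first _ (take (l - 1) s') sp) -Es -[p ++ s]drop0; apply: Hwin.
have [u' Htr] := abstract_past_tr sp Hfirst.
exists u', (behead (p ++ [:: Some y])); do 2 split=> //; first by exists x'.
split; first by case: Htr => _ [_ [_ [z' [_ [Hz' _]]]]]; exists z'.
move=> j Hj; case: (ltnP j.+1 l) => Hj1.
- by rewrite window_shift // -Es; apply: Hwin.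
- have -> : j = (l - 1)%N by lia.
  by rewrite window_last //; apply: step_realizable Hd Hx'.
Qed.

Lemma future_past_simulation :
  is_simulation VY (abstractSM delta X0 l l) (abstractSM delta X0 l 0) future_past_rel.
Proof.
split; [by move=> s p [? [? _]] | split; first exact: future_past_rel_init].
move=> s p u y s' Hrel Htr.
have [u' [p' [Htr' Hrel']]] := future_past_rel_step Hrel Htr.
by exists u', y, p'.
Qed.

End FutureUnique.
End Behaviours.

Theorem corollary13 (X U : Type) (Y : finType)
  (delta : X -> U -> Y -> X -> Prop) (X0 : X -> Prop) (l : nat) :
  live_reachable delta X0 ->
  standing_delta delta ->
  (1 <= l)%N ->
  future_unique delta X0 l l ->
  bisimilar VY (quotientSM delta X0 l) (abstractSM delta X0 l l) /\
  simulated_by VY (abstractSM delta X0 l l) (abstractSM delta X0 l 0).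
Proof.
move=> LR _ l_gt0 FU; split.
- exists (quotient_rel delta X0 l); split.
  + exact: quotient_future_simulation.
  + exact: future_quotient_simulation.
- exists (future_past_rel delta X0 l); exact: future_past_simulation.
Qed.
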